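(* Let $L>0$, $\theta>0$, and for each $t$ let $\widehat\varphi_t$ be convex with $C\subset\operatorname{dom}\partial\widehat\varphi_t$ and $\partial\widehat\varphi_t$ $L$-Lipschitz on $C$ (i.e. $\|g-h\|\le L\|x-y\|$ for $g\in\partial\widehat\varphi_t(x)$, $h\in\partial\widehat\varphi_t(y)$, $x,y\in C$). At each round $t$, let expert points $\boldsymbol x_t=(x_t(0),\dots,x_t(n))\in C^{n+1}$ be given, and let $w_t,\widetilde w_t$ be generated by ONES (with $\widetilde w_1$ having positive entries) using $$\ell_t(i)=\langle g_t,x_t(i)\rangle,\ g_t\in\partial\varphi_t(\overline x_t),\ \overline x_t=\textstyle\sum_i w_t(i)x_t(i);\qquad \widehat\ell_t(i)=\langle \widehat g_t,x_t(i)\rangle,\ \widehat g_t\in\partial\widehat\varphi_t(\widetilde{\overline x}_t),\ \widetilde{\overline x}_t=\textstyle\sum_i\widetilde w_t(i)x_t(i).$$ Then for all $T\ge1$ and $w\in\triangle^n$, $$\sum_{t=1}^T\langle\ell_t,w_t-w\rangle\le\frac1\theta\sum_iw(i)\ln\frac{w(i)}{\widetilde w_1(i)}+\theta\rho^2\sum_{t=1}^T\Big(\sup_{x\in C,\,g\in\partial\varphi_t(x),\,\widehat g\in\partial\widehat\varphi_t(x)}\|g-\widehat g\|^2+\mathbf 1\{\theta>\tfrac{1}{\sqrt2\rho^2L}\}\rho^2L^2\|w_t-\widetilde w_t\|_1^2\Big).$$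
   Context: $H$ is a real Hilbert space, $C\subset H$ nonempty closed convex with diameter $\rho=\sup_{x,y\in C}\|x-y\|<\infty$, and (as used by the paper) $\|x\|\le\rho$ for all $x\in C$. Losses $\varphi_t$ are convex with $C\subset\operatorname{dom}\partial\varphi_t$. ONES: $\widetilde w_{t+1}=\mathscr N(\widetilde w_t\circ e^{-\theta\ell_t})$, $w_{t}=\mathscr N(\widetilde w_{t}\circ e^{-\theta\widehat\ell_{t}})$, where $\triangle^n=\{w\in\mathbb R^{n+1}_+:\|w\|_1=1\}$, $\circ$ is the Hadamard product, $\mathscr N(u)=u/\|u\|_1$; $\mathbf 1\{\cdot\}$ is the zero-one indicator. *)

From HB Require Import structures.
From mathcomp Require Import all_boot all_order all_algebra.
From mathcomp Require Import all_classical all_reals all_analysis.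
Set Implicit Arguments. Unset Strict Implicit. Unset Printing Implicit Defensive.
Import Order.TTheory GRing.Theory Num.Theory.
Import numFieldNormedType.Exports.
Local Open Scope classical_set_scope.
Local Open Scope ring_scope.

Definition is_inner_product (R : realType) (H : completeNormedModType R)
  (inner : H -> H -> R) : Prop :=
  [/\ (forall x y, inner x y = inner y x),
      (forall a x y z, inner (a *: x + y) z = a * inner x z + inner y z)
    & (forall x, inner x x = `|x| ^+ 2)].

(* proper convex function H -> ]-oo,+oo] *)
Definition convex_fun (R : realType) (H : completeNormedModType R)
  (f : H -> \bar R) : Prop :=
  (forall x, f x != -oo%E) /\
  forall (x y : H) (l : R), 0 < l < 1 ->
    (f (l *: x + (1 - l) *: y)%R <= l%:E * f x + (1 - l)%:E * f y)%E.

Definition subgrad (R : realType) (H : completeNormedModType R)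
  (inner : H -> H -> R) (f : H -> \bar R) (x g : H) : Prop :=
  f x \is a fin_num /\ forall y, (f x + (inner g (y - x))%:E <= f y)%E.

Definition simplex (R : realType) (n : nat) (w : 'I_n.+1 -> R) : Prop :=
  (forall i, 0 <= w i) /\ \sum_i w i = 1.

Definition ones_update (R : realType) (n : nat) (theta : R)
  (u l : 'I_n.+1 -> R) (i : 'I_n.+1) : R :=
  u i * expR (- (theta * l i)) / \sum_j u j * expR (- (theta * l j)).

Definition subgrad_gap (R : realType) (H : completeNormedModType R)
  (inner : H -> H -> R) (C : set H) (f fh : H -> \bar R) : \bar R :=
  ereal_sup [set r | exists x g gh, [/\ C x, subgrad inner f x g,
     subgrad inner fh x gh & r = (`|g - gh| ^+ 2)%:E]].

(* ONES is an exponential-weights step from [wt t], and the optimistic weights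
   [w t] are the same step driven by the hint losses. Against any [u], one round
   costs the drop of the relative entropy KL(u || wt), plus θ²ρ²|g - ĝ|²/2 by the
   log-moment bound (losses minus hints have range ρ|g - ĝ|), minus |w - wt|₁²/4 by
   Pinsker, because the hint step already pays KL(w || wt). Passing |g - ĝ| through
   a subgradient of φ̂ at the played point, the Lipschitz bound costs Lρ|w - wt|₁/2,
   whose square the Pinsker term absorbs unless θ > 1/(√2ρ²L); this is where the
   indicator comes from. Summing over the rounds, the relative entropies telescope. *)

From HB Require Import structures.
From mathcomp Require Import all_boot all_order all_algebra.
From mathcomp Require Import all_classical all_reals all_analysis.
From mathcomp Require Import ring lra.
Import Order.TTheory GRing.Theory Num.Theory.
Import numFieldNormedType.Exports.
Local Open Scope classical_set_scope.
Local Open Scope ring_scope.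
Set Implicit Arguments. Unset Strict Implicit. Unset Printing Implicit Defensive.

Section InnerProduct.
Context {R : realType} {H : completeNormedModType R} (inner : H -> H -> R).
Hypothesis ip : is_inner_product inner.

Lemma innerDl x y z : inner (x + y) z = inner x z + inner y z.
Proof. by case: ip => _ lin _; rewrite -[x in LHS]scale1r lin mul1r. Qed.

Lemma inner0l z : inner 0 z = 0.
Proof. by have := innerDl 0 0 z; rewrite addr0; lra. Qed.

Lemma innerZl a x z : inner (a *: x) z = a * inner x z.
Proof. by case: ip => _ lin _; rewrite -[a *: x]addr0 lin inner0l addr0. Qed.

Lemma innerBl x y z : inner (x - y) z = inner x z - inner y z.
Proof. by rewrite innerDl -scaleN1r innerZl mulN1r. Qed.

Lemma innerC x y : inner x y = inner y x.
Proof. by case: ip. Qed.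

Lemma innerBr x y z : inner z (x - y) = inner z x - inner z y.
Proof. by rewrite innerC innerBl !(innerC z). Qed.

Lemma innerZr a x z : inner z (a *: x) = a * inner z x.
Proof. by rewrite innerC innerZl innerC. Qed.

Lemma inner_self x : inner x x = `|x| ^+ 2.
Proof. by case: ip. Qed.

Lemma inner_le_norm a b : inner a b <= `|a| * `|b|.
Proof.
have [->|a0] := eqVneq a 0; first by rewrite inner0l mulr_ge0.
have [->|b0] := eqVneq b 0; first by rewrite innerC inner0l mulr_ge0.
set al := `|a|; set be := `|b|.
have alp : 0 < al by rewrite normr_gt0.
have bep : 0 < be by rewrite normr_gt0.
have h : 0 <= inner (be *: a - al *: b) (be *: a - al *: b) by rewrite inner_self sqr_ge0.
rewrite !innerBl !innerBr !innerZl !innerZr !inner_self (innerC b a) -/al -/be in h.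
have : al * be * inner a b <= al * be * (al * be) by nra.
by rewrite ler_pM2l ?mulr_gt0.
Qed.

Lemma inner_diff_le (g h a b : H) (rho : R) : `|a - b| <= rho ->
  (inner g a - inner h a) - (inner g b - inner h b) <= rho * `|g - h|.
Proof.
move=> ab; have -> : (inner g a - inner h a) - (inner g b - inner h b) =
    inner (g - h) (a - b) by rewrite innerBr !innerBl; ring.
by rewrite (le_trans (inner_le_norm _ _)) // mulrC ler_wpM2r.
Qed.

End InnerProduct.

Lemma convex_set_comb (R : realType) (H : completeNormedModType R) (C : set H)
    (m : nat) (w : 'I_m.+1 -> R) (y : 'I_m.+1 -> H) :
  convex_set C -> (forall i, 0 <= w i) -> \sum_i w i = 1 -> (forall i, C (y i)) ->
  C (\sum_i w i *: y i).
Proof.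
move=> cC; elim: m w y => [|m IH] w y w0 w1 yC.
  by move: w1; rewrite !big_ord1 => ->; rewrite scale1r.
rewrite big_ord_recl in w1; rewrite big_ord_recl.
set s := \sum_(i < m.+1) w (lift ord0 i) in w1.
have s0 : 0 <= s by rewrite sumr_ge0.
have [s_eq0|s_neq0] := eqVneq s 0.
  have rest0 i : w (lift ord0 i) = 0.
    by apply: (psumr_eq0P (fun i _ => w0 (lift ord0 i)) s_eq0).
  have -> : w ord0 = 1 by rewrite -w1 s_eq0 addr0.
  by rewrite scale1r big1 ?addr0 // => i _; rewrite rest0 scale0r.
have sp : 0 < s by rewrite lt_def s_neq0.
have Cz : C (\sum_(i < m.+1) (w (lift ord0 i) / s) *: y (lift ord0 i)).
  by apply: IH => [i||i]; rewrite ?divr_ge0 ?yC // -mulr_suml divff.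
have -> : \sum_(i < m.+1) w (lift ord0 i) *: y (lift ord0 i) =
    s *: \sum_(i < m.+1) (w (lift ord0 i) / s) *: y (lift ord0 i).
  by rewrite scaler_sumr; apply: eq_bigr => i _; rewrite scalerA mulrCA divff ?mulr1.
have w0_le1 : w ord0 <= 1 by rewrite -w1 lerDl.
have := cC (y ord0) _ (Itv01 (w0 ord0) w0_le1) (mem_set (yC ord0)) (mem_set Cz).
have ws : 1 - w ord0 = s by rewrite -w1 addrC addKr.
by rewrite inE /conv /= /unstable.onem ws.
Qed.

Lemma ln_le_subr1 (R : realType) (x : R) : 0 < x -> ln x <= x - 1.
Proof.
by move=> x0; rewrite -ler_expR lnK ?posrE // (le_trans _ (expR_ge1Dx _)) // addrC subrK.
Qed.

Lemma expR_ge_quadratic (R : realType) (x : R) : 0 <= x -> 1 + x + x ^+ 2 / 2 <= expR x.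
Proof.
move=> x0; rewrite /expR.
have nd : nondecreasing_seq (series (exp_coeff x)).
  by rewrite seriesEnat; apply: nondecreasing_series => n _ _; exact: exp_coeff_ge0.
apply: le_trans (nondecreasing_cvgn_le nd (is_cvg_series_exp_coeff x) 3).
by rewrite seriesEnat /= !big_nat_recr //= big_nil /exp_coeff /= add0r expr0 expr1 !divr1.
Qed.

Lemma expRN_le_quadratic (R : realType) (y : R) : 0 <= y -> expR (- y) <= 1 - y + y ^+ 2 / 2.
Proof.
move=> y0; rewrite expRN.
have p1 : 0 < 1 + y + y ^+ 2 / 2.
  by rewrite -addrA ltr_wpDr // addr_ge0 // divr_ge0 // exprn_ge0.
apply: (@le_trans _ _ (1 + y + y ^+ 2 / 2)^-1).
  by rewrite lef_pV2 ?posrE ?expR_gt0 //; exact: expR_ge_quadratic.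
rewrite -[X in X <= _]mulr1 ler_pdivrMl // -subr_ge0.
have -> : (1 + y + y ^+ 2 / 2) * (1 - y + y ^+ 2 / 2) - 1 = y ^+ 4 / 4 by field.
by rewrite divr_ge0 // exprn_ge0.
Qed.

Definition relative_entropy (R : realType) (n : nat) (u q : 'I_n.+1 -> R) : R :=
  \sum_i u i * ln (u i / q i).

Definition l1_dist (R : realType) (n : nat) (p q : 'I_n.+1 -> R) : R :=
  \sum_i `|p i - q i|.

Section Divergences.
Context {R : realType} {n : nat}.
Implicit Types (p q u : 'I_n.+1 -> R).

Lemma relative_entropy_ge0 u q :
  (forall i, 0 <= u i) -> \sum_i u i = 1 -> (forall i, 0 < q i) -> \sum_i q i = 1 ->
  0 <= relative_entropy u q.
Proof.
move=> u0 u1 q0 q1; rewrite -(subrr 1) -[in X in X - _]u1 -q1 -sumrB.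
apply: ler_sum => i _.
have [->|u_neq0] := eqVneq (u i) 0; first by rewrite mul0r sub0r oppr_le0 ltW.
have up : 0 < u i by rewrite lt_def u_neq0 u0.
have := ler_wpM2l (ltW up) (ln_le_subr1 (divr_gt0 (q0 i) up)).
have -> : u i * (q i / u i - 1) = q i - u i by field; exact: lt0r_neq0.
have -> : ln (u i / q i) = - ln (q i / u i) by rewrite !ln_div ?posrE // opprB.
rewrite mulrN; lra.
Qed.

Lemma mul_ln_ge_sqrt (a b : R) : 0 < a -> 0 < b ->
  2 * (a - Num.sqrt a * Num.sqrt b) <= a * ln (a / b).
Proof.
move=> a0 b0.
have sa : 0 < Num.sqrt a by rewrite sqrtr_gt0.
have sb : 0 < Num.sqrt b by rewrite sqrtr_gt0.
have -> : a / b = (Num.sqrt b / Num.sqrt a) ^-2.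
  by rewrite -exprVn invf_div expr_div_n !sqr_sqrtr ?ltW.
rewrite lnV ?posrE ?exprn_gt0 ?divr_gt0 // lnXn ?divr_gt0 // mulr2n mulrN.
have := ler_wpM2l (ltW a0) (ln_le_subr1 (divr_gt0 sb sa)).
have -> : a * (Num.sqrt b / Num.sqrt a - 1) = Num.sqrt a * Num.sqrt b - a.
  rewrite mulrBr mulr1 -[X in X * _](sqr_sqrtr (ltW a0)); field; exact: lt0r_neq0.
lra.
Qed.

Lemma normB_le_sqrt (a b al : R) : 0 <= a -> 0 <= b -> 0 < al ->
  `|a - b| <= al / 2 * (Num.sqrt a - Num.sqrt b) ^+ 2
              + (Num.sqrt a + Num.sqrt b) ^+ 2 / (2 * al).
Proof.
move=> a0 b0 al0.
have -> : a - b = (Num.sqrt a - Num.sqrt b) * (Num.sqrt a + Num.sqrt b).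
  by rewrite -subr_sqr !sqr_sqrtr.
set u := Num.sqrt a - Num.sqrt b; set v := Num.sqrt a + Num.sqrt b.
have v0 : 0 <= v by rewrite addr_ge0 // sqrtr_ge0.
rewrite normrM (ger0_norm v0) -[u ^+ 2](real_normK (num_real u)) -subr_ge0.
have -> : al / 2 * `|u| ^+ 2 + v ^+ 2 / (2 * al) - `|u| * v = (al * `|u| - v) ^+ 2 / (2 * al).
  by field; exact: lt0r_neq0.
by rewrite divr_ge0 ?sqr_ge0 // mulr_ge0 // ltW.
Qed.

Lemma relative_entropy_ge_bhattacharyya p q :
  (forall i, 0 < p i) -> (forall i, 0 < q i) -> \sum_i p i = 1 ->
  2 * (1 - \sum_i Num.sqrt (p i) * Num.sqrt (q i)) <= relative_entropy p q.
Proof.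
move=> p0 q0 p1; rewrite -[X in _ * (X - _)]p1 -sumrB mulr_sumr.
by apply: ler_sum => i _; exact: mul_ln_ge_sqrt.
Qed.

Lemma l1_dist_sqr_le_bhattacharyya p q :
  (forall i, 0 <= p i) -> (forall i, 0 <= q i) -> \sum_i p i = 1 -> \sum_i q i = 1 ->
  l1_dist p q ^+ 2 <= 8 * (1 - \sum_i Num.sqrt (p i) * Num.sqrt (q i)).
Proof.
move=> p0 q0 p1 q1.
set X := l1_dist p q; set BC := \sum_i _.
have sqrB : \sum_i (Num.sqrt (p i) - Num.sqrt (q i)) ^+ 2 = 2 - 2 * BC.
  rewrite (eq_bigr (fun i => p i + q i - 2 * (Num.sqrt (p i) * Num.sqrt (q i)))).
    by rewrite sumrB big_split /= p1 q1 /BC mulr_sumr.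
  by move=> i _; rewrite sqrrB !sqr_sqrtr // mulr2n mulrDl mul1r; ring.
have sqrD : \sum_i (Num.sqrt (p i) + Num.sqrt (q i)) ^+ 2 = 2 + 2 * BC.
  rewrite (eq_bigr (fun i => p i + q i + 2 * (Num.sqrt (p i) * Num.sqrt (q i)))).
    by rewrite !big_split /= p1 q1 /BC mulr_sumr.
  by move=> i _; rewrite sqrrD !sqr_sqrtr // mulr2n mulrDl mul1r; ring.
have BC1 : BC <= 1.
  have : 0 <= \sum_i (Num.sqrt (p i) - Num.sqrt (q i)) ^+ 2.
    by apply: sumr_ge0 => i _; rewrite sqr_ge0.
  rewrite sqrB; lra.
have X0 : 0 <= X by apply: sumr_ge0.
have [->|X_neq0] := eqVneq X 0; first by rewrite expr0n mulr_ge0 // subr_ge0.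
have Xp : 0 < X by rewrite lt_def X_neq0.
(* [normB_le_sqrt] with the weight [4 / X], which balances its two terms *)
have : X <= 4 / X / 2 * (2 - 2 * BC) + (2 + 2 * BC) / (2 * (4 / X)).
  rewrite -sqrB -sqrD mulr_sumr mulr_suml -big_split.
  by apply: ler_sum => i _; apply: normB_le_sqrt; rewrite ?divr_gt0.
have -> : 4 / X / 2 * (2 - 2 * BC) + (2 + 2 * BC) / (2 * (4 / X)) =
    4 * (1 - BC) / X + (1 + BC) * X / 4 by field; exact: lt0r_neq0.
set Y := 4 * (1 - BC) / X.
have XY : X * Y = 4 * (1 - BC) by rewrite /Y mulrCA divff ?mulr1.
nra.
Qed.

Lemma relative_entropy_ge_l1_dist_sqr p q :
  (forall i, 0 < p i) -> (forall i, 0 < q i) -> \sum_i p i = 1 -> \sum_i q i = 1 ->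
  l1_dist p q ^+ 2 / 4 <= relative_entropy p q.
Proof.
move=> p0 q0 p1 q1.
have := relative_entropy_ge_bhattacharyya p0 q0 p1.
have := l1_dist_sqr_le_bhattacharyya (fun i => ltW (p0 i)) (fun i => ltW (q0 i)) p1 q1.
lra.
Qed.

End Divergences.

Lemma ln_sum_expR_le (R : realType) (n : nat) (p d : 'I_n.+1 -> R) (th r : R) :
  (forall i, 0 <= p i) -> \sum_i p i = 1 -> 0 <= th -> (forall i j, d i - d j <= r) ->
  th * (\sum_i d i * p i) + ln (\sum_i p i * expR (- (th * d i))) <= th ^+ 2 * r ^+ 2 / 2.
Proof.
move=> p0 p1 th0 dr.
have sum_const a : \sum_i p i * a = a by rewrite -mulr_suml p1 mul1r.
(* shift [d] by its minimum [c], so that [y i] lies in [0, th * r] *)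
have [j _ dj] := @arg_minP _ R 'I_n.+1 ord0 xpredT d isT.
set c := d j; pose y i := th * (d i - c).
have y0 i : 0 <= y i by rewrite mulr_ge0 // subr_ge0 dj.
have yr i : y i <= th * r by rewrite /y ler_wpM2l // dr.
set S := \sum_i p i * expR (- y i).
have S0 : 0 < S.
  apply: (lt_le_trans (expR_gt0 (- (th * r)))).
  rewrite -[X in X <= _]sum_const; apply: ler_sum => i _.
  by rewrite ler_wpM2l // ler_expR lerN2.
have -> : \sum_i p i * expR (- (th * d i)) = expR (- (th * c)) * S.
  rewrite mulr_sumr; apply: eq_bigr => i _.
  by rewrite mulrCA -expRD /y; congr (_ * expR _); ring.
rewrite lnM ?posrE ?expR_gt0 // expRK.
have -> : th * (\sum_i d i * p i) = th * c + \sum_i p i * y i.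
  rewrite -[th * c]sum_const mulr_sumr -big_split; apply: eq_bigr => i _ /=; rewrite /y; ring.
have lnS : ln S <= \sum_i p i * (- y i + y i ^+ 2 / 2).
  apply: (le_trans (ln_le_subr1 S0)).
  rewrite -[X in _ - X](sum_const 1) -sumrB; apply: ler_sum => i _.
  rewrite -mulrBr ler_wpM2l //; have := expRN_le_quadratic (y0 i); lra.
have ysqr : \sum_i p i * y i + \sum_i p i * (- y i + y i ^+ 2 / 2) <= th ^+ 2 * r ^+ 2 / 2.
  rewrite -big_split -[X in _ <= X]sum_const; apply: ler_sum => i _ /=.
  rewrite -mulrDr ler_wpM2l // addrA addrN add0r ler_wpM2r // -exprMn.
  by rewrite lerXn2r // nnegrE (le_trans (y0 i)).
lra.
Qed.

Section OnesUpdate.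
Context {R : realType} {n : nat} (theta : R).
Implicit Types (q u l m : 'I_n.+1 -> R).

Definition ones_norm q l : R := \sum_j q j * expR (- (theta * l j)).

Lemma ones_norm_gt0 q l : (forall i, 0 < q i) -> 0 < ones_norm q l.
Proof.
move=> q0; rewrite /ones_norm (bigD1 ord0) //= ltr_wpDr ?mulr_gt0 ?expR_gt0 //.
by rewrite sumr_ge0 // => j _; rewrite mulr_ge0 ?expR_ge0 ?ltW.
Qed.

Lemma ones_update_gt0 q l i : (forall i, 0 < q i) -> 0 < ones_update theta q l i.
Proof. by move=> q0; rewrite divr_gt0 ?mulr_gt0 ?expR_gt0 ?ones_norm_gt0. Qed.

Lemma ones_update_sum1 q l : (forall i, 0 < q i) -> \sum_i ones_update theta q l i = 1.
Proof. by move=> q0; rewrite -mulr_suml divff // gt_eqF // ones_norm_gt0. Qed.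

Lemma relative_entropy_ones_update u q l :
  (forall i, 0 <= u i) -> \sum_i u i = 1 -> (forall i, 0 < q i) ->
  relative_entropy u q - relative_entropy u (ones_update theta q l) =
  - (theta * \sum_i l i * u i) - ln (ones_norm q l).
Proof.
move=> u0 u1 q0; have Z0 := ones_norm_gt0 l q0.
rewrite -sumrB (eq_bigr (fun i => - (theta * (l i * u i)) - u i * ln (ones_norm q l))).
  by rewrite sumrB sumrN mulr_sumr -mulr_suml u1 mul1r.
move=> i _; have [->|u_neq0] := eqVneq (u i) 0.
  by rewrite !(mul0r, mulr0, subrr, oppr0, subr0).
have up : 0 < u i by rewrite lt_def u_neq0 u0.
rewrite -mulrBr !ln_div ?posrE ?ones_update_gt0 ?mulr_gt0 ?expR_gt0 //.
by rewrite lnM ?posrE ?expR_gt0 // expRK -/(ones_norm q l); ring.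
Qed.

Lemma relative_entropy_ones_update_prior q m :
  (forall i, 0 < q i) -> relative_entropy (ones_update theta q m) q =
  - (theta * \sum_i m i * ones_update theta q m i) - ln (ones_norm q m).
Proof.
move=> q0; set p := ones_update theta q m; have p0 i : 0 < p i by exact: ones_update_gt0.
have pp : relative_entropy p p = 0.
  by rewrite /relative_entropy big1 // => i _; rewrite divff ?gt_eqF // ln1 mulr0.
have := relative_entropy_ones_update m (fun i => ltW (p0 i)) (ones_update_sum1 m q0) q0.
by rewrite -/p pp subr0.
Qed.

Lemma ones_norm_update q l m : (forall i, 0 < q i) ->
  ones_norm q l =
  ones_norm q m * \sum_i ones_update theta q m i * expR (- (theta * (l i - m i))).
Proof.
move=> q0; rewrite mulr_sumr; apply: eq_bigr => i _.
rewrite /ones_update -/(ones_norm q m) mulrA mulrCA divff ?gt_eqF ?ones_norm_gt0 //.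
by rewrite mulr1 -mulrA -expRD; congr (_ * expR _); ring.
Qed.

End OnesUpdate.

Lemma ones_optimistic_regret (R : realType) (n : nat) (theta r : R)
    (q u l m : 'I_n.+1 -> R) :
  0 <= theta -> (forall i, 0 < q i) -> \sum_i q i = 1 ->
  (forall i, 0 <= u i) -> \sum_i u i = 1 ->
  (forall i j, (l i - m i) - (l j - m j) <= r) ->
  theta * (\sum_i l i * (ones_update theta q m i - u i)) <=
    relative_entropy u q - relative_entropy u (ones_update theta q l)
    + theta ^+ 2 * r ^+ 2 / 2 - l1_dist (ones_update theta q m) q ^+ 2 / 4.
Proof.
move=> th0 q0 q1 u0 u1 lmr.
set p := ones_update theta q m.
have p0 i : 0 < p i by exact: ones_update_gt0.
have p1 : \sum_i p i = 1 by exact: ones_update_sum1.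
have step := relative_entropy_ones_update theta l u0 u1 q0.
have prior := relative_entropy_ones_update_prior theta m q0.
have pin := relative_entropy_ge_l1_dist_sqr p0 q0 p1 q1.
have mgf := ln_sum_expR_le (fun i => ltW (p0 i)) p1 th0 lmr.
have S0 : 0 < \sum_i p i * expR (- (theta * (l i - m i))).
  by rewrite -(pmulr_rgt0 _ (ones_norm_gt0 theta m q0)) -ones_norm_update ?ones_norm_gt0.
rewrite (ones_norm_update theta l m q0) lnM ?posrE ?ones_norm_gt0 // in step.
have -> : theta * (\sum_i l i * (p i - u i)) = theta * (\sum_i (l i - m i) * p i)
    + theta * (\sum_i m i * p i) - theta * (\sum_i l i * u i).
  by rewrite -!mulrDr -mulrBr -big_split -sumrB; congr (_ * _); apply: eq_bigr => i _ /=; ring.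
lra.
Qed.

Lemma norm_sum_zero_le (R : realType) (H : normedModType R) (n : nat) (c : 'I_n.+1 -> R)
    (x : 'I_n.+1 -> H) (rho : R) :
  \sum_i c i = 0 -> (forall i j, `|x i - x j| <= rho) ->
  `|\sum_i c i *: x i| <= rho / 2 * \sum_i `|c i|.
Proof.
move=> c0 xr.
(* split [c] into its positive and negative parts, which have equal mass [P] *)
pose cp i := (`|c i| + c i) / 2; pose cm i := (`|c i| - c i) / 2.
have cp0 i : 0 <= cp i by rewrite divr_ge0 // -lerBlDr sub0r -normrN ler_norm.
have cm0 i : 0 <= cm i by rewrite divr_ge0 // subr_ge0 ler_norm.
set P := (\sum_i `|c i|) / 2.
have sp : \sum_i cp i = P by rewrite -mulr_suml big_split /= c0 addr0.
have sm : \sum_i cm i = P by rewrite -mulr_suml sumrB c0 subr0.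
have pairs : P *: \sum_i c i *: x i = \sum_i \sum_j (cp i * cm j) *: (x i - x j).
  have -> : \sum_i \sum_j (cp i * cm j) *: (x i - x j) =
      P *: \sum_i cp i *: x i - P *: \sum_j cm j *: x j.
    have A : \sum_i \sum_j (cp i * cm j) *: x i = P *: \sum_i cp i *: x i.
      rewrite scaler_sumr; apply: eq_bigr => i _.
      by rewrite -scaler_suml -mulr_sumr sm scalerA mulrC.
    have B : \sum_i \sum_j (cp i * cm j) *: x j = P *: \sum_j cm j *: x j.
      rewrite exchange_big scaler_sumr; apply: eq_bigr => j _.
      by rewrite -scaler_suml -mulr_suml sp scalerA mulrC.
    rewrite -A -B -sumrB; apply: eq_bigr => i _.
    by rewrite -sumrB; apply: eq_bigr => j _; rewrite scalerBr.
  rewrite -scalerBr -sumrB; congr (_ *: _); apply: eq_bigr => i _.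
  by rewrite -scalerBl /cp /cm; congr (_ *: _); field.
have [P0|P_neq0] := eqVneq P 0.
  have S0 : \sum_i `|c i| = 0.
    by move/eqP: P0; rewrite mulf_eq0 invr_eq0 pnatr_eq0 orbF => /eqP.
  have c_eq0 i : c i = 0.
    by apply/normr0_eq0; apply: (psumr_eq0P (fun i _ => normr_ge0 (c i)) S0).
  by rewrite big1 ?normr0 ?S0 ?mulr0 // => i _; rewrite c_eq0 scale0r.
have Pp : 0 < P by rewrite lt_def P_neq0 divr_ge0 ?sumr_ge0.
have bound : `|\sum_i \sum_j (cp i * cm j) *: (x i - x j)| <= P * P * rho.
  apply: (le_trans (ler_norm_sum _ _ _)).
  rewrite -[X in X * _ * _]sp !mulr_suml; apply: ler_sum => i _.
  apply: (le_trans (ler_norm_sum _ _ _)).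
  rewrite -sm mulr_sumr mulr_suml; apply: ler_sum => j _.
  by rewrite normrZ ger0_norm ?ler_wpM2l // mulr_ge0.
have -> : rho / 2 * \sum_i `|c i| = rho * P by rewrite /P; ring.
rewrite -(ler_pM2l Pp) -{1}(ger0_norm (ltW Pp)) -normrZ pairs.
by have -> : P * (rho * P) = P * P * rho by ring.
Qed.

Lemma indicator_slack (R : realType) (rho L theta : R) : 0 < theta ->
  (theta * rho ^+ 2 * L) ^+ 2 / 4 - 1 / 4 <=
  ((1 / (Num.sqrt 2 * rho ^+ 2 * L) < theta)%R%:R : R) * (theta * rho ^+ 2 * L) ^+ 2.
Proof.
move=> th0; set k := theta * rho ^+ 2 * L; set a := Num.sqrt 2 * rho ^+ 2 * L.
have [_|th_le] := ltP (1 / a) theta; first by rewrite /= mul1r; have := sqr_ge0 k; lra.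
(* below the threshold, [sqrt 2 * k = theta * a <= 1] *)
have a0 : 0 < a by rewrite -invr_gt0 -div1r (lt_le_trans th0).
have tha : theta * a <= 1 by rewrite -ler_pdivlMr.
have k2 : k ^+ 2 * 2 = (theta * a) ^+ 2.
  by rewrite /k /a -[X in _ * X](@sqr_sqrtr _ 2) //; ring.
have ta0 : 0 <= theta * a by rewrite mulr_ge0 // ltW.
rewrite /= mul0r; nra.
Qed.

Lemma regret_slack_le (R : realType) (theta rho L D G X k i : R) :
  0 <= D -> D <= G + L * (rho / 2 * X) -> k = theta * rho ^+ 2 * L ->
  k ^+ 2 / 4 - 1 / 4 <= i * k ^+ 2 ->
  theta ^+ 2 * (rho * D) ^+ 2 / 2 - X ^+ 2 / 4 <=
  theta ^+ 2 * (rho ^+ 2 * (G ^+ 2 + i * rho ^+ 2 * L ^+ 2 * X ^+ 2)).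
Proof.
move=> D0 DG -> slack.
set t := L * (rho / 2 * X).
have D2 : D ^+ 2 <= 2 * G ^+ 2 + 2 * t ^+ 2.
  have : D ^+ 2 <= (G + t) ^+ 2 by rewrite lerXn2r // nnegrE (le_trans D0).
  by move/le_trans; apply; rewrite -subr_ge0 -[X in 0 <= X](_ : (G - t) ^+ 2 = _) ?sqr_ge0 //; ring.
have := ler_wpM2l (mulr_ge0 (sqr_ge0 (theta * rho)) (ler0n R 1)) D2.
have := ler_wpM2r (sqr_ge0 X) slack.
rewrite /t; nra.
Qed.

Lemma ones_round_regret (R : realType) (H : completeNormedModType R)
    (inner : H -> H -> R) (C : set H) (rho L theta : R) (n : nat)
    (xs : 'I_n.+1 -> H) (g gh gs : H) (q u : 'I_n.+1 -> R) :
  is_inner_product inner -> (forall i, C (xs i)) ->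
  (forall a b, C a -> C b -> `|a - b| <= rho) -> 0 <= L -> 0 < theta ->
  (forall i, 0 < q i) -> \sum_i q i = 1 -> (forall i, 0 <= u i) -> \sum_i u i = 1 ->
  let p := ones_update theta q (fun i => inner gh (xs i)) in
  `|gs - gh| <= L * `|\sum_i p i *: xs i - \sum_i q i *: xs i| ->
  theta * (\sum_i inner g (xs i) * (p i - u i)) <=
    relative_entropy u q
    - relative_entropy u (ones_update theta q (fun i => inner g (xs i)))
    + theta ^+ 2 * (rho ^+ 2 * (`|g - gs| ^+ 2
      + ((1 / (Num.sqrt 2 * rho ^+ 2 * L) < theta)%R%:R : R) * rho ^+ 2 * L ^+ 2
        * l1_dist p q ^+ 2)).
Proof.
move=> ip xsC diam L0 th0 q0 q1 u0 u1 p lip.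
have rho0 : 0 <= rho := le_trans (normr_ge0 _) (diam _ _ (xsC ord0) (xsC ord0)).
have range i j : (inner g (xs i) - inner gh (xs i)) - (inner g (xs j) - inner gh (xs j))
    <= rho * `|g - gh| by apply: inner_diff_le; last exact: diam.
have regret := ones_optimistic_regret (ltW th0) q0 q1 u0 u1 range.
have shift : `|\sum_i p i *: xs i - \sum_i q i *: xs i| <= rho / 2 * l1_dist p q.
  rewrite -sumrB (eq_bigr (fun i => (p i - q i) *: xs i)) => [|i _]; last by rewrite scalerBl.
  apply: norm_sum_zero_le => [|i j]; last exact: diam.
  by rewrite sumrB ones_update_sum1 // q1 subrr.
have gap : `|g - gh| <= `|g - gs| + L * (rho / 2 * l1_dist p q).
  by rewrite (le_trans (ler_distD gs _ _)) // lerD2l (le_trans lip) // ler_wpM2l.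
have := regret_slack_le (normr_ge0 _) gap erefl (indicator_slack rho L th0).
move: regret; rewrite -/p; lra.
Qed.

Lemma ones_iter_simplex (R : realType) (n : nat) (theta : R)
    (q ell : nat -> 'I_n.+1 -> R) :
  (forall i, 0 < q 1%N i) -> \sum_i q 1%N i = 1 ->
  (forall t, (1 <= t)%N -> q t.+1 = ones_update theta (q t) (ell t)) ->
  forall t, (1 <= t)%N -> (forall i, 0 < q t i) /\ \sum_i q t i = 1.
Proof.
move=> q10 q11 qS; elim=> [//|[|t] IH] _; first by [].
have [qt0 _] := IH isT; rewrite qS //.
by split; [move=> i; exact: ones_update_gt0 | exact: ones_update_sum1].
Qed.

Lemma le_sup_diam (R : realType) (H : normedModType R) (C : set H) (a b : H) :
  has_ubound [set `|a - b| | a in C & b in C] -> C a -> C b ->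
  `|a - b| <= sup [set `|a - b| | a in C & b in C].
Proof.
move=> ub Ca Cb; apply: sup_upper_bound; last by exists a => //; exists b.
by split=> //; exists `|a - b|; exists a => //; exists b.
Qed.

Lemma subgrad_gap_ge (R : realType) (H : completeNormedModType R) (inner : H -> H -> R)
    (C : set H) (f fh : H -> \bar R) (x g gh : H) :
  C x -> subgrad inner f x g -> subgrad inner fh x gh ->
  ((`|g - gh| ^+ 2)%:E <= subgrad_gap inner C f fh)%E.
Proof. by move=> Cx fg fhg; apply: ereal_sup_ubound; exists x, g, gh. Qed.

Lemma telescope_regret (R : realType) (theta c : R) (A B K : nat -> R) (T : nat) :
  0 < theta -> 0 <= K T.+1 ->
  (forall t, (1 <= t)%N -> theta * A t <= K t - K t.+1 + theta ^+ 2 * (c * B t)) ->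
  \sum_(1 <= t < T.+1) A t <= theta^-1 * K 1%N + theta * c * \sum_(1 <= t < T.+1) B t.
Proof.
move=> th0 KT round.
have tel : \sum_(1 <= t < T.+1) (K t - K t.+1) = K 1%N - K T.+1.
  by rewrite -opprB -telescope_sumr // -sumrN; apply: eq_bigr => t _; rewrite opprB.
have sumA : theta * \sum_(1 <= t < T.+1) A t <=
    K 1%N - K T.+1 + theta ^+ 2 * (c * \sum_(1 <= t < T.+1) B t).
  rewrite -tel !mulr_sumr -big_split; apply: ler_sum_nat => t /andP[t1 _].
  exact: round.
suff : theta * \sum_(1 <= t < T.+1) A t <=
    theta * (theta^-1 * K 1%N + theta * c * \sum_(1 <= t < T.+1) B t) by rewrite ler_pM2l.
have -> : theta * (theta^-1 * K 1%N + theta * c * \sum_(1 <= t < T.+1) B t) =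
  K 1%N + theta ^+ 2 * (c * \sum_(1 <= t < T.+1) B t) by field; rewrite gt_eqF.
lra.
Qed.

Unset Implicit Arguments.

Theorem corollary4 (R : realType) (H : completeNormedModType R)
  (inner : H -> H -> R) (C : set H) (rho L theta : R) (n : nat)
  (phi phih : nat -> H -> \bar R)
  (x : nat -> 'I_n.+1 -> H) (g gh : nat -> H)
  (w wt : nat -> 'I_n.+1 -> R) :
  is_inner_product inner ->
  C !=set0 -> closed C -> convex_set C ->
  has_ubound [set `|a - b| | a in C & b in C] ->
  rho = sup [set `|a - b| | a in C & b in C] ->
  (forall a, C a -> `|a| <= rho) ->
  (forall t, convex_fun (phi t)) ->
  (forall t a, C a -> exists g0, subgrad inner (phi t) a g0) ->
  0 < L -> 0 < theta ->
  (forall t, convex_fun (phih t)) ->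
  (forall t a, C a -> exists g0, subgrad inner (phih t) a g0) ->
  (forall t a b ga gb, C a -> C b -> subgrad inner (phih t) a ga ->
     subgrad inner (phih t) b gb -> `|ga - gb| <= L * `|a - b|) ->
  (forall t i, (1 <= t)%N -> C (x t i)) ->
  simplex (wt 1%N) -> (forall i, 0 < wt 1%N i) ->
  (forall t, (1 <= t)%N ->
     subgrad inner (phih t) (\sum_i wt t i *: x t i) (gh t)) ->
  (forall t, (1 <= t)%N ->
     w t = ones_update theta (wt t) (fun i => inner (gh t) (x t i))) ->
  (forall t, (1 <= t)%N ->
     subgrad inner (phi t) (\sum_i w t i *: x t i) (g t)) ->
  (forall t, (1 <= t)%N ->
     wt t.+1 = ones_update theta (wt t) (fun i => inner (g t) (x t i))) ->
  forall (T : nat) (u : 'I_n.+1 -> R), (1 <= T)%N -> simplex u ->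
  ((\sum_(1 <= t < T.+1) \sum_i inner (g t) (x t i) * (w t i - u i))%:E
   <= (theta^-1 * \sum_i u i * ln (u i / wt 1%N i))%:E
      + (theta * rho ^+ 2)%:E *
        \sum_(1 <= t < T.+1)
          (subgrad_gap inner C (phi t) (phih t)
           + (((1 / (Num.sqrt 2 * rho ^+ 2 * L) < theta)%R%:R : R)
              * rho ^+ 2 * L ^+ 2 * (\sum_i `|w t i - wt t i|) ^+ 2)%:E))%E.
Proof.
move=> ip _ _ Ccv Cub rhoE _ _ _ L0 th0 _ phihsub lip xC [_ wt11] wt10 ghs wE gs wtE
  T u _ [u0 u1].
have wts := ones_iter_simplex wt10 wt11 wtE.
have diam a b : C a -> C b -> `|a - b| <= rho by rewrite rhoE; exact: le_sup_diam.
pose xbar t := \sum_i w t i *: x t i.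
have xbarC t : (1 <= t)%N -> C (xbar t).
  move=> t1; have [wt0 _] := wts t t1; rewrite /xbar wE //.
  by apply: convex_set_comb => [|i||i] //;
    [exact/ltW/ones_update_gt0 | exact: ones_update_sum1 | exact: xC].
have xtilC t : (1 <= t)%N -> C (\sum_i wt t i *: x t i).
  move=> t1; have [wt0 ?] := wts t t1.
  by apply: convex_set_comb => [|i||i] //; [exact: ltW | exact: xC].
have /choice[gs0 gs0P] : forall t, exists g0, (1 <= t)%N -> subgrad inner (phih t) (xbar t) g0.
  move=> t; have [t1|] := boolP (1 <= t)%N; last by exists 0.
  by have [g0 ?] := phihsub t _ (xbarC t t1); exists g0.
set ind := ((1 / (Num.sqrt 2 * rho ^+ 2 * L) < theta)%R%:R : R).
pose B t := `|g t - gs0 t| ^+ 2 + ind * rho ^+ 2 * L ^+ 2 * (\sum_i `|w t i - wt t i|) ^+ 2.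
have round t : (1 <= t)%N -> theta * (\sum_i inner (g t) (x t i) * (w t i - u i)) <=
    relative_entropy u (wt t) - relative_entropy u (wt t.+1) + theta ^+ 2 * (rho ^+ 2 * B t).
  move=> t1; have [wt0 wt1] := wts t t1.
  have := lip t _ _ _ _ (xbarC t t1) (xtilC t t1) (gs0P t t1) (ghs t t1).
  rewrite /xbar /B wE // wtE //.
  exact: (ones_round_regret (g t) ip (xC t^~ t1) diam (ltW L0) th0 wt0 wt1 u0 u1).
have KT : 0 <= relative_entropy u (wt T.+1).
  by have [? ?] := wts T.+1 isT; exact: relative_entropy_ge0.
move: (telescope_regret th0 KT round); rewrite -lee_fin => /le_trans; apply.
rewrite /relative_entropy EFinD; apply: leeD2l; rewrite EFinM; apply: lee_wpmul2l.
  by rewrite lee_fin mulr_ge0 ?sqr_ge0 ?ltW.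
rewrite -sumEFin big_nat_cond [leRHS]big_nat_cond; apply: lee_sum => t /andP[/andP[t1 _] _].
by rewrite EFinD leeD2r // (subgrad_gap_ge (xbarC t t1) (gs t t1) (gs0P t t1)).
Qed.
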